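(* Let $\lambda,\alpha_1,\alpha_2\in\mathbb{C}^*$ and consider the tensor product $\mathcal{W}$-module $\Omega(\lambda,\alpha_1)\otimes\Omega(\lambda,\alpha_2)$ (both factors being $\mathbb{C}[Y]$). Let $U=\mathrm{span}\{\sum_{t=0}^{j}\binom{j}{t}Y^{j-t}\otimes Y^t\mid j\in\mathbb{N}\}$. Then $U$ is a nonzero proper $\mathcal{W}$-submodule of $\Omega(\lambda,\alpha_1)\otimes\Omega(\lambda,\alpha_2)$; consequently $\Omega(\lambda,\alpha_1)\otimes\Omega(\lambda,\alpha_2)$ is a reducible $\mathcal{W}$-module.
   Context: The Witt algebra $\mathcal{W}$ is the complex Lie algebra with basis $\{L_m\mid m\in\mathbb{Z}\}$ and bracket $[L_m,L_n]=(n-m)L_{m+n}$. For $\lambda\in\mathbb{C}^*$ and $\alpha\in\mathbb{C}$, $\Omega(\lambda,\alpha)$ denotes the $\mathcal{W}$-module $\mathbb{C}[Y]$ with $L_m f(Y)=\lambda^m(Y+m\alpha)f(Y-m)$ for $m\in\mathbb{Z}$. The tensor product has action $L_m(v\otimes w)=L_mv\otimes w+v\otimes L_mw$. $\mathbb{N}$ denotes non-negative integers. *)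

(* The complex field is modelled as R[i] (mathcomp-real-closed
   `complex`) for an arbitrary R : realType (so R[i] is the field of complex numbers). *)
From HB Require Import structures.
From mathcomp Require Import all_boot all_order all_algebra.
From mathcomp Require Import reals complex.
Set Implicit Arguments. Unset Strict Implicit. Unset Printing Implicit Defensive.
Import Order.TTheory GRing.Theory Num.Theory.
Local Open Scope ring_scope.

Definition omegaGen (K : comNzRingType) (c a : K) (m : int) (f : {poly K}) : {poly K} :=
  c *: (('X + (m%:~R * a)%:P) * (f \Po ('X - (m%:~R)%:P))).

Definition OmegaAct (R : realType) (lam al : R[i]) (m : int) (f : {poly R[i]}) : {poly R[i]} :=
  omegaGen (lam ^ m) al m f.

(* Model of the tensor product C[Y] (x) C[Y]:  {poly {poly C}}, where the inner
   (coefficient) polynomials carry the first tensor factor and the outer variable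
   carries the second one. *)
Definition tens (R : realType) (v w : {poly R[i]}) : {poly {poly R[i]}} :=
  map_poly (fun c => c *: v) w.

(* Action of L_m on Omega(lam,a1) (x) Omega(lam,a2): L_m acting on the first
   factor (coefficientwise) plus L_m acting on the second factor, so that
   L_m (v (x) w) = L_m v (x) w + v (x) L_m w. *)
Definition tensAct (R : realType) (lam a1 a2 : R[i]) (m : int)
    (h : {poly {poly R[i]}}) : {poly {poly R[i]}} :=
  map_poly (OmegaAct lam a1 m) h + omegaGen ((lam ^ m)%:P) (a2%:P) m h.

Definition ugen (R : realType) (j : nat) : {poly {poly R[i]}} :=
  \sum_(t < j.+1) ('C(j, t))%:R *: tens ('X^(j - t)) ('X^t).

Definition inU (R : realType) (h : {poly {poly R[i]}}) : Prop :=
  exists (n : nat) (c : nat -> R[i]), h = \sum_(j < n) (c j)%:P *: ugen R j.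

Definition is_submodule (R : realType) (lam a1 a2 : R[i])
    (S : {poly {poly R[i]}} -> Prop) : Prop :=
  [/\ S 0, (forall x y, S x -> S y -> S (x + y)),
      (forall (c : R[i]) x, S x -> S ((c%:P) *: x)) &
      (forall (m : int) x, S x -> S (tensAct lam a1 a2 m x))].

Definition tens_reducible (R : realType) (lam a1 a2 : R[i]) : Prop :=
  exists S : {poly {poly R[i]}} -> Prop,
    [/\ is_submodule lam a1 a2 S, (exists x, S x /\ x != 0) & (exists x, ~ S x)].

(** By the binomial theorem [u_j = (Y (x) 1 + 1 (x) Y)^j], so [U] is the image of
    the algebra map [p(Y) |-> p(Y (x) 1 + 1 (x) Y)].  As [L_m] shifts each tensor
    factor by [-m], it shifts [Y (x) 1 + 1 (x) Y] by [-m] too, and so acts on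
    [p(Y (x) 1 + 1 (x) Y)] as it acts on [p] in [Omega(lambda, alpha1 + alpha2)]:
    [U] is a submodule.  It misses [1 (x) Y], since setting the second variable
    to [0] in [p(Y (x) 1 + 1 (x) Y)] gives back [p]. *)
From HB Require Import structures.
From mathcomp Require Import all_boot all_order all_algebra.
From mathcomp Require Import reals complex.
From mathcomp Require Import ring.
Import Order.TTheory GRing.Theory Num.Theory.
Local Open Scope ring_scope.

Section DiagonalEmbedding.

Context {K : comNzRingType}.

Local Notation polyC2 := (polyC \o polyC : K -> {poly {poly K}}).

Definition sumY : {poly {poly K}} := 'X%:P + 'X.

Definition at_sumY : {rmorphism {poly K} -> {poly {poly K}}} :=
  horner_morph (fun c => mulrC sumY (polyC2 c)).

Lemma at_sumYC c : at_sumY c%:P = polyC2 c.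
Proof. exact: horner_morphC. Qed.

Lemma at_sumYX : at_sumY 'X = sumY.
Proof. exact: horner_morphX. Qed.

Lemma rmorph_at_sumY {S : nzRingType} (phi : {rmorphism {poly {poly K}} -> S})
    (f : K -> S) p :
  (forall c, phi (polyC2 c) = f c) -> phi (at_sumY p) = (map_poly f p).[phi sumY].
Proof.
move=> phiC; rewrite /at_sumY /= /horner_morph -horner_map -map_poly_comp.
by congr (_.[_]); apply: eq_map_poly.
Qed.

Lemma at_sumY_comp p q : at_sumY (p \Po q) = (map_poly polyC2 p).[at_sumY q].
Proof. by rewrite /at_sumY /= /horner_morph map_comp_poly horner_comp. Qed.

Lemma at_sumY_shift (n : K) : at_sumY ('X - n%:P) = sumY - polyC2 n.
Proof. by rewrite rmorphB at_sumYX at_sumYC. Qed.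

Lemma at_sumY_shiftl (n : K) p :
  map_poly (comp_poly ('X - n%:P)) (at_sumY p) = at_sumY (p \Po ('X - n%:P)).
Proof.
rewrite at_sumY_comp at_sumY_shift.
rewrite (rmorph_at_sumY (map_poly (comp_poly _)) polyC2) => [|c].
  by rewrite /sumY rmorphD /= map_polyX map_polyC /= comp_polyX rmorphB /= addrAC.
by rewrite /= map_polyC /= comp_polyC.
Qed.

Lemma at_sumY_shiftr (n : K) p :
  at_sumY p \Po ('X - n%:P%:P) = at_sumY (p \Po ('X - n%:P)).
Proof.
rewrite at_sumY_comp at_sumY_shift (rmorph_at_sumY (comp_poly _) polyC2) => [|c].
  by rewrite /sumY rmorphD /= comp_polyC comp_polyX addrA.
by rewrite /= comp_polyC.
Qed.

Lemma at_sumY_at0 p : (at_sumY p).[0] = p.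
Proof.
rewrite -[_.[0]]/(horner_eval 0 (at_sumY p)) (rmorph_at_sumY _ polyC) => [|c].
  by rewrite /= /horner_eval /sumY hornerD hornerX hornerC addr0; exact: comp_polyXr.
by rewrite /= /horner_eval hornerC.
Qed.

Lemma omegaGen_tens_at_sumY (c a1 a2 : K) (m : int) p :
  map_poly (omegaGen c a1 m) (at_sumY p) + omegaGen c%:P a2%:P m (at_sumY p)
  = at_sumY (omegaGen c (a1 + a2) m p).
Proof.
set n : K := m%:~R; have nE : m%:~R = n%:P by rewrite -(rmorph_int polyC).
have -> : map_poly (omegaGen c a1 m) (at_sumY p) =
    (c *: ('X + (n * a1)%:P))%:P *
      map_poly (comp_poly ('X - n%:P)) (at_sumY p).
  apply/polyP=> i; rewrite coefCM !coef_map_id0 ?comp_poly0 //.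
    by rewrite /omegaGen scalerAl.
  by rewrite /omegaGen comp_poly0 mulr0 scaler0.
rewrite /omegaGen !nE at_sumY_shiftl at_sumY_shiftr -!mul_polyC.
rewrite [RHS]rmorphM [at_sumY (_ * _)]rmorphM rmorphD at_sumYX !at_sumYC.
move: (at_sumY _) => A; rewrite /sumY /=; ring.
Qed.

End DiagonalEmbedding.

Section TensorSubmodule.

Variable R : realType.

Lemma tensE (v w : {poly R[i]}) : tens v w = v%:P * map_poly polyC w.
Proof.
apply/polyP=> k; rewrite /tens coefCM coef_map_id0 ?scale0r // coef_map /=.
by rewrite -mul_polyC mulrC.
Qed.

Lemma ugenE j : ugen R j = sumY ^+ j.
Proof.
rewrite /ugen /sumY exprDn; apply: eq_bigr => t _.
by rewrite tensE map_polyXn scaler_nat rmorphXn.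
Qed.

Lemma inU_image (h : {poly {poly R[i]}}) : inU h <-> exists p, h = at_sumY p.
Proof.
split=> [[n [c ->]]|[p ->]].
  exists (\sum_(j < n) c j *: 'X^j); rewrite rmorph_sum; apply: eq_bigr => j _.
  by rewrite -[c j *: _]mul_polyC rmorphM rmorphXn at_sumYC at_sumYX ugenE mul_polyC.
exists (size p), (fun j => p`_j); rewrite /at_sumY /= /horner_morph.
rewrite (horner_coef_wide _ (eq_leq (size_map_poly _ _))).
by apply: eq_bigr => j _; rewrite coef_map ugenE /= mul_polyC.
Qed.

Lemma tensAct_at_sumY (lam a1 a2 : R[i]) m p :
  tensAct lam a1 a2 m (at_sumY p) = at_sumY (OmegaAct lam (a1 + a2) m p).
Proof. exact: omegaGen_tens_at_sumY. Qed.

Lemma inU_submodule (lam a1 a2 : R[i]) : is_submodule lam a1 a2 (@inU R).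
Proof.
split.
- by apply/inU_image; exists 0; rewrite rmorph0.
- move=> _ _ /inU_image[p ->] /inU_image[q ->]; apply/inU_image.
  by exists (p + q); rewrite rmorphD.
- move=> c _ /inU_image[p ->]; apply/inU_image.
  by exists (c%:P * p); rewrite rmorphM at_sumYC mul_polyC.
- move=> m _ /inU_image[p ->]; apply/inU_image.
  by exists (OmegaAct lam (a1 + a2) m p); rewrite tensAct_at_sumY.
Qed.

Lemma one_inU : inU (1 : {poly {poly R[i]}}).
Proof. by apply/inU_image; exists 1; rewrite rmorph1. Qed.

Lemma X_notin_inU : ~ inU ('X : {poly {poly R[i]}}).
Proof.
case/inU_image=> p Xp; have p0 : p = 0 by rewrite -(at_sumY_at0 p) -Xp hornerX.
by move/eqP: Xp; rewrite p0 rmorph0 polyX_eq0.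
Qed.

End TensorSubmodule.

Theorem mainTheorem14 (R : realType) (lam a1 a2 : R[i]) :
  lam != 0 -> a1 != 0 -> a2 != 0 ->
  [/\ is_submodule lam a1 a2 (@inU R),
      (exists x, @inU R x /\ x != 0),
      (exists x, ~ @inU R x) &
      tens_reducible lam a1 a2].
Proof.
move=> _ _ _.
have nonzero : exists x, @inU R x /\ x != 0.
  by exists 1; split; [exact: one_inU | exact: oner_neq0].
have proper : exists x, ~ @inU R x by exists 'X; exact: X_notin_inU.
split=> //; first exact: inU_submodule.
by exists (@inU R); split=> //; exact: inU_submodule.
Qed.
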